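(* Let $k\ge2$. For all $\ell\in[n]$ with $\ell\ge k^2+k$ and all $r\in\{0,1,\dots,k\}$, $$\mathbb{E}[v(\mathrm{ALG}^{\ge\ell}_r)]\ \ge\ \left(\frac{r\ell}{(k-1)n}-\frac{1}{k-1}\left(\frac{\ell}{n}\right)^k\sum_{r'=0}^{r-1}\sum_{i=0}^{r'}\frac{(k-1)^i}{i!}\ln^i\!\left(\frac{n}{\ell}\right)-\frac{3k^2r}{(k-1)n}\right)\alpha\, v(\mathrm{OPT}).$$
   Context: Submodular secretary setting. Let $U$ be a finite ground set of $n$ items and $k\ge1$ an integer. Let $v\colon 2^U\to\mathbb{R}_{\ge0}$ be monotone and submodular, and $\mathrm{OPT}\in\arg\max\{v(S): S\subseteq U, |S|\le k\}$. The items arrive one per round (rounds $1,\dots,n$) in a uniformly random order; for $\ell\in[n]$, $U^{\le \ell}$ denotes the set of items arriving in rounds $1,\dots,\ell$. $\mathcal{A}$ is an offline algorithm that, for every $L\subseteq U$, returns a set $\mathcal{A}(L)\subseteq L$ with $|\mathcal{A}(L)|\le k$ and $v(\mathcal{A}(L))\ge \alpha\max\{v(T):T\subseteq L,|T|\le k\}$, where $\alpha\in(0,1]$; $\mathcal{A}(L)$ depends only on the set $L$. Random sets $\mathrm{ALG}^{\ge\ell}_r\subseteq U$ for $\ell\in\{1,\dots,n+1\}$, $r\in\{0,\dots,k\}$ are defined recursively: $\mathrm{ALG}^{\ge\ell}_0=\emptyset$ for all $\ell$, $\mathrm{ALG}^{\ge n+1}_r=\emptyset$ for all $r$, and for $\ell\in[n]$,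 $r\ge1$, letting $j$ be the item arriving in round $\ell$: $\mathrm{ALG}^{\ge\ell}_r=\{j\}\cup\mathrm{ALG}^{\ge\ell+1}_{r-1}$ if $j\in\mathcal{A}(U^{\le\ell})$, and $\mathrm{ALG}^{\ge\ell}_r=\mathrm{ALG}^{\ge\ell+1}_{r}$ otherwise. *)

From Stdlib Require Import Reals.
From mathcomp Require Import all_boot perm.
Set Implicit Arguments. Unset Strict Implicit. Unset Printing Implicit Defensive.

(* Ground set U = 'I_n.  A random order is a permutation sigma : {perm 'I_n};
   the item arriving in round t+1 (t : 'I_n) is sigma t. *)

Definition prefix (n : nat) (sigma : {perm 'I_n}) (l : nat) : {set 'I_n} :=
  [set sigma t | t in [pred t : 'I_n | (t < l)%N]].

Fixpoint alg_rec (n : nat) (A : {set 'I_n} -> {set 'I_n}) (sigma : {perm 'I_n})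
    (d l r : nat) {struct d} : {set 'I_n} :=
  match d with
  | 0 => set0
  | d'.+1 =>
    match r with
    | 0 => set0
    | r'.+1 =>
      match [pick t : 'I_n | t.+1 == l] with
      | Some t =>
          if sigma t \in A (prefix sigma l)
          then sigma t |: alg_rec A sigma d' l.+1 r'
          else alg_rec A sigma d' l.+1 r
      | None => set0
      end
    end
  end.

Definition ALG (n : nat) (A : {set 'I_n} -> {set 'I_n}) (sigma : {perm 'I_n})
    (l r : nat) : {set 'I_n} :=
  alg_rec A sigma (n.+1 - l) l r.

Local Open Scope R_scope.

Definition Eperm (n : nat) (f : {perm 'I_n} -> R) : R :=
  (\big[Rplus/0]_(s : {perm 'I_n}) f s) / INR #|{: {perm 'I_n}}|.

Definition monotone (n : nat) (v : {set 'I_n} -> R) : Prop :=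
  forall S T : {set 'I_n}, S \subset T -> v S <= v T.

Definition submodular (n : nat) (v : {set 'I_n} -> R) : Prop :=
  forall S T : {set 'I_n}, v (S :|: T) + v (S :&: T) <= v S + v T.

(* Write a(l, r) for E[v(ALG^{>=l}_r)] and V = alpha v(OPT).  Given the set U^{<=l} and the
   arrivals after round l, the item of round l is uniform in U^{<=l}, and it is taken iff it lies in
   A(U^{<=l}), a set of at most k items of value >= alpha v(OPT /\ U^{<=l}).  Submodularity and
   E[v(OPT /\ U^{<=l})] >= (l/n) v(OPT) then give, for l >= k,
     l a(l, r+1) >= (l/n) V + (l - k) a(l+1, r+1) + (k - 1) a(l+1, r).
   The bound of the theorem is G_r(l/n) V, where G_r(x) = (r x - Phi_r(x) - 3k^2 r/n)/(k-1) and
   Phi_r(x) = x^k P_r(-(k-1) ln x), P_r(a) = sum_{r'<r} sum_{i<=r'} a^i/i!, solves the continuous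
   recursion x Phi_r' = k Phi_r - (k-1) Phi_{r-1}.  A second-order Taylor estimate shows that G
   satisfies the discrete recursion up to an O(1/n^2) error, which the term 3k^2 r/n absorbs, and
   a backward induction on l from l = n, where G_r(1) <= 0, concludes. *)

From Stdlib Require Import Reals Lra Lia Factorial.
From mathcomp Require Import all_boot perm fingroup zify Rstruct.
Set Implicit Arguments. Unset Strict Implicit. Unset Printing Implicit Defensive.
Local Open Scope R_scope.

Definition exp_trunc (a : R) (m : nat) : R :=
  sum_f_R0 (fun i => / INR (fact i) * a ^ i) m.

Lemma exp_trunc_derivative a m :
  derivable_pt_lim (exp_trunc^~ m) a (if m is m'.+1 then exp_trunc a m' else 0).
Proof.
case: m => [|m]; first exact: (derivable_pt_lim_finite_sum (fun i => / INR (fact i)) a 0).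
have -> : exp_trunc a m = sum_f_R0 (fun i => INR i.+1 * / INR (fact i.+1) * a ^ i) m.
  rewrite /exp_trunc; apply: PartSum.sum_eq => i _; rewrite fact_simpl mult_INR.
  by field; split; [exact: INR_fact_neq_0 | exact: not_0_INR].
exact: derivable_pt_lim_finite_sum.
Qed.

Lemma exp_trunc_bounds a m : 0 <= a -> 1 <= exp_trunc a m <= exp a.
Proof.
move=> a_ge0.
have term_ge0 i : 0 <= / INR (fact i) * a ^ i.
  by apply: Rmult_le_pos; [exact/Rlt_le/Rinv_0_lt_compat/INR_fact_lt_0 | exact: pow_le].
split.
- elim: m => [|m IH]; first by rewrite /exp_trunc /= Rinv_1; lra.
  by rewrite /exp_trunc tech5 -/(exp_trunc a m); have := term_ge0 m.+1; lra.
- apply: growing_ineq; first by move=> i; rewrite /exp_trunc tech5; have := term_ge0 i.+1; lra.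
  by rewrite /exp; case: (exist_exp a).
Qed.

Definition exp_trunc_sum (a : R) (r : nat) : R := \big[Rplus/0]_(0 <= j < r) exp_trunc a j.

Lemma exp_trunc_sum_derivative a r :
  derivable_pt_lim (exp_trunc_sum^~ r) a (exp_trunc_sum a r.-1).
Proof.
elim: r => [|r IH].
  apply: (derivable_pt_lim_ext (fun=> 0)); first by move=> b; rewrite /exp_trunc_sum big_nil.
  by rewrite /exp_trunc_sum big_nil; exact: derivable_pt_lim_const.
apply: (derivable_pt_lim_ext (fun b => exp_trunc_sum b r + exp_trunc b r)).
  by move=> b; rewrite /exp_trunc_sum big_nat_recr.
suff -> : exp_trunc_sum a r = exp_trunc_sum a r.-1 + (if r is r'.+1 then exp_trunc a r' else 0).
  exact: derivable_pt_lim_plus IH (exp_trunc_derivative a r).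
by case: r {IH} => [|r]; rewrite /exp_trunc_sum ?big_nil ?big_nat_recr //=; ring.
Qed.

Lemma exp_trunc_sum_bounds a r : 0 <= a -> INR r <= exp_trunc_sum a r <= INR r * exp a.
Proof.
move=> a_ge0; elim: r => [|r IH]; first by rewrite /exp_trunc_sum big_nil /=; lra.
rewrite S_INR /exp_trunc_sum big_nat_recr //= -/(exp_trunc_sum a r).
have := exp_trunc_bounds r a_ge0; lra.
Qed.

Lemma factorial_fact i : i`! = fact i.
Proof. by elim: i => // i IH; rewrite factS IH. Qed.

Lemma exp_trunc_big c L m :
  \big[Rplus/0]_(0 <= i < m.+1) (c ^ i / INR i`! * L ^ i) = exp_trunc (c * L) m.
Proof.
elim: m => [|m IH]; first by rewrite big_nat1 /exp_trunc /=; field.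
rewrite big_nat_recr //= IH /exp_trunc tech5 factorial_fact Rpow_mult_distr -!tech_pow_Rmult.
by field; exact: INR_fact_neq_0.
Qed.

Lemma exp_trunc_sum_big c L r :
  \big[Rplus/0]_(0 <= r' < r) \big[Rplus/0]_(0 <= i < r'.+1) (c ^ i / INR i`! * L ^ i)
  = exp_trunc_sum (c * L) r.
Proof. by apply: eq_bigr => r' _; rewrite exp_trunc_big. Qed.

Lemma taylor2_lower_bound (f f' f'' : R -> R) x y M :
  x < y -> 0 <= M ->
  (forall c, x <= c <= y -> derivable_pt_lim f c (f' c)) ->
  (forall c, x <= c <= y -> derivable_pt_lim f' c (f'' c)) ->
  (forall c, x <= c <= y -> - M <= f'' c) ->
  f y - f x - (y - x) * f' y <= (y - x) ^ 2 * M.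
Proof.
move=> x_lt_y M_ge0 df df' f''_ge.
have [c [f_mvt [x_lt_c c_lt_y]]] := MVT_cor2 f f' x y x_lt_y df.
have df'_cy z : c <= z <= y -> derivable_pt_lim f' z (f'' z) by move=> z_cy; apply: df'; lra.
have [d [f'_mvt [c_lt_d d_lt_y]]] := MVT_cor2 f' f'' c y c_lt_y df'_cy.
have f''d : - M <= f'' d by apply: f''_ge; lra.
have -> : f y - f x - (y - x) * f' y = - ((y - x) * (y - c)) * f'' d.
  by rewrite f_mvt (_ : f' y = f' c + f'' d * (y - c)); [ring | lra].
have : 0 <= (y - x) * (y - c) <= (y - x) ^ 2 by split; nra.
nra.
Qed.

Section LowerBoundFunction.
Variable k : nat.
Hypothesis k_gt0 : (0 < k)%N.
Local Notation K := (INR k - 1).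

Definition Phi (r : nat) (x : R) : R := x ^ k * exp_trunc_sum (- (K * ln x)) r.
Definition Phi' (r : nat) (x : R) : R := (INR k * Phi r x - K * Phi r.-1 x) / x.

Lemma Phi_derivative r x : 0 < x -> derivable_pt_lim (Phi r) x (Phi' r x).
Proof.
move=> x_gt0.
have dlog : derivable_pt_lim (fun y => - (K * ln y)) x (- (K * / x)).
  exact/derivable_pt_lim_opp/derivable_pt_lim_scal/derivable_pt_lim_ln.
have xk : x ^ k = x * x ^ k.-1 by case: k k_gt0.
have -> : Phi' r x = INR k * x ^ k.-1 * exp_trunc_sum (- (K * ln x)) r
                   + x ^ k * (exp_trunc_sum (- (K * ln x)) r.-1 * - (K * / x)).
  by rewrite /Phi' /Phi xk; field; lra.
exact: derivable_pt_lim_mult (derivable_pt_lim_pow x k)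
         (derivable_pt_lim_comp _ _ _ _ _ dlog (exp_trunc_sum_derivative _ r)).
Qed.

Lemma Phi'_derivative r x : 0 < x -> derivable_pt_lim (Phi' r) x (K * (Phi' r x - Phi' r.-1 x) / x).
Proof.
move=> x_gt0.
have num_x : INR k * Phi r x - K * Phi r.-1 x = x * Phi' r x by rewrite /Phi'; field; lra.
have := derivable_pt_lim_div (fun y => INR k * Phi r y - K * Phi r.-1 y) id x _ _
  (derivable_pt_lim_minus _ _ _ _ _
     (derivable_pt_lim_scal _ _ _ _ (Phi_derivative r x_gt0))
     (derivable_pt_lim_scal _ _ _ _ (Phi_derivative r.-1 x_gt0)))
  (derivable_pt_lim_id x) (Rgt_not_eq _ _ x_gt0).
rewrite /= num_x /Rsqr.
have -> : ((INR k * Phi' r x - K * Phi' r.-1 x) * x - 1 * (x * Phi' r x)) / (x * x)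
          = K * (Phi' r x - Phi' r.-1 x) / x by field; lra.
exact.
Qed.

Lemma Phi_bounds r x : 0 < x <= 1 -> 0 <= Phi r x <= INR r * x.
Proof.
move=> [x_gt0 x_le1].
have K_nat : K = INR k.-1 by rewrite -{1}(prednK k_gt0) S_INR; ring.
have arg_ge0 : 0 <= - (K * ln x).
  have : ln x <= 0.
    case: (Rle_lt_or_eq_dec _ _ x_le1) => [x_lt1 | ->]; last by rewrite ln_1; lra.
    by rewrite -ln_1; apply/Rlt_le/ln_increasing.
  by have := pos_INR k.-1; rewrite -K_nat; nra.
have [lo hi] := exp_trunc_sum_bounds r arg_ge0.
have exp_arg : x ^ k * exp (- (K * ln x)) = x.
  rewrite K_nat -ln_pow // exp_Ropp exp_ln; last exact: pow_lt.
  by rewrite -(prednK k_gt0) /=; field; apply: pow_nonzero; lra.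
have xk_ge0 : 0 <= x ^ k by apply: pow_le; lra.
rewrite /Phi; split; first by apply: Rmult_le_pos => //; have := pos_INR r; lra.
apply: (Rle_trans _ (x ^ k * (INR r * exp (- (K * ln x))))); first exact: Rmult_le_compat_l.
by rewrite -Rmult_assoc (Rmult_comm (x ^ k)) Rmult_assoc exp_arg; right.
Qed.

Lemma Phi_at_1 r : INR r <= Phi r 1.
Proof.
rewrite /Phi ln_1 Rmult_0_r Ropp_0 pow1 Rmult_1_l.
exact: (exp_trunc_sum_bounds r (Rle_refl 0)).1.
Qed.

Lemma Phi'_bounds r x : 0 < x <= 1 ->
  - ((INR k + K) * INR r) <= Phi' r x <= (INR k + K) * INR r.
Proof.
move=> x01; have [x_gt0 _] := x01.
have [q0 q1] := Phi_bounds r x01; have [p0 p1] := Phi_bounds r.-1 x01.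
have K_ge0 : 0 <= K by have := le_INR 1 k (ltP k_gt0); rewrite /=; lra.
have p2 : Phi r.-1 x <= INR r * x.
  have : INR r.-1 <= INR r by apply: le_INR; apply/leP; exact: leq_pred.
  nra.
have x_Phi' : x * Phi' r x = INR k * Phi r x - K * Phi r.-1 x by rewrite /Phi'; field; lra.
have k_ge0 := pos_INR k; have rx_ge0 : 0 <= INR r * x by have := pos_INR r; nra.
have up : x * Phi' r x <= x * ((INR k + K) * INR r) by rewrite x_Phi'; nra.
have lo : x * - ((INR k + K) * INR r) <= x * Phi' r x by rewrite x_Phi'; nra.
by split; apply: Rmult_le_reg_l x_gt0 _.
Qed.

Lemma Phi''_lower_bound r c : 0 < c <= 1 ->
  - (2 * K * (INR k + K) * INR r.+1) / c <= K * (Phi' r.+1 c - Phi' r c) / c.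
Proof.
move=> c01; have [c_gt0 _] := c01.
have K_ge0 : 0 <= K by have := le_INR 1 k (ltP k_gt0); rewrite /=; lra.
have [lo1 hi1] := Phi'_bounds r.+1 c01; have [lo0 hi0] := Phi'_bounds r c01.
have diff : - (2 * ((INR k + K) * INR r.+1)) <= Phi' r.+1 c - Phi' r c.
  have : (INR k + K) * INR r <= (INR k + K) * INR r.+1.
    by apply: Rmult_le_compat_l; [have := pos_INR k | rewrite S_INR]; lra.
  lra.
apply: Rmult_le_compat_r; first exact/Rlt_le/Rinv_0_lt_compat.
nra.
Qed.

(* [G (1/n) r (l/n)] is the coefficient of [alpha * v OPT] in the theorem. *)
Definition G (h : R) (r : nat) (x : R) : R :=
  (INR r * x - Phi r x - 3 * INR k ^ 2 * INR r * h) / K.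

Lemma G_0 h x : G h 0 x = 0.
Proof.
by rewrite /G /Phi /exp_trunc_sum big_nil /= !(Rmult_0_l, Rmult_0_r, Rminus_0_r) Rdiv_0_l.
Qed.

Lemma G_at_1 h r : (1 < k)%N -> 0 <= h -> G h r 1 <= 0.
Proof.
move=> k_gt1 h_ge0.
have K_gt0 : 0 < K by have := lt_INR 1 k (ltP k_gt1); rewrite /=; lra.
have num_le0 : INR r * 1 - Phi r 1 - 3 * INR k ^ 2 * INR r * h <= 0.
  have : 0 <= INR k ^ 2 * INR r * h.
    by apply: Rmult_le_pos => //; apply: Rmult_le_pos; [apply: pow_le |]; exact: pos_INR.
  have := Phi_at_1 r; lra.
rewrite /G /Rdiv; have := Rinv_0_lt_compat _ K_gt0; nra.
Qed.

Lemma Phi_taylor_error r x h : 0 < x -> 0 < h -> x + h <= 1 ->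
  x * (Phi r.+1 (x + h) - Phi r.+1 x - h * Phi' r.+1 (x + h))
  <= h ^ 2 * (2 * K * (INR k + K) * INR r.+1).
Proof.
move=> x_gt0 h_gt0 xh_le1.
set M := 2 * K * (INR k + K) * INR r.+1.
have M_ge0 : 0 <= M.
  have := le_INR 1 k (ltP k_gt0); have := pos_INR r.+1; rewrite /M /= => *.
  by repeat apply: Rmult_le_pos; lra.
have taylor : Phi r.+1 (x + h) - Phi r.+1 x - h * Phi' r.+1 (x + h) <= h ^ 2 * (M / x).
  have := @taylor2_lower_bound (Phi r.+1) (Phi' r.+1)
    (fun c => K * (Phi' r.+1 c - Phi' r c) / c) x (x + h) (M / x).
  rewrite (_ : x + h - x = h); last ring.
  apply; first lra.
  - by apply: Rmult_le_pos => //; exact/Rlt_le/Rinv_0_lt_compat.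
  - by move=> c xc; apply: Phi_derivative; lra.
  - by move=> c xc; apply: Phi'_derivative; lra.
  - move=> c xc; apply: Rle_trans (Phi''_lower_bound r (_ : 0 < c <= 1)); last lra.
    have : M / c <= M / x by apply: Rmult_le_compat_l => //; apply: Rinv_le_contravar; lra.
    by rewrite /M /Rdiv; lra.
have := Rmult_le_compat_l x _ _ (Rlt_le _ _ x_gt0) taylor.
by rewrite (_ : x * (h ^ 2 * (M / x)) = h ^ 2 * M) //; field; lra.
Qed.

Lemma G_step h r x : (1 < k)%N -> (r < k)%N -> 0 < h -> 0 < x -> x + h <= 1 ->
  G h r.+1 x <= h + (1 - INR k * h / x) * G h r.+1 (x + h) + K * h / x * G h r (x + h).
Proof.
move=> k_gt1 r_lt_k h_gt0 x_gt0 xh_le1.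
have k_ge2 : 2 <= INR k by apply: (le_INR 2); apply/leP.
have s_bounds : 1 <= INR r.+1 <= INR k.
  by split; [rewrite S_INR; have := pos_INR r; lra | apply: le_INR; exact/leP].
have xE := Phi_taylor_error r x_gt0 h_gt0 xh_le1.
have D_lo : - ((INR k + K) * INR r.+1) <= Phi' r.+1 (x + h).
  by apply: (Phi'_bounds r.+1 _).1; lra.
have Phi_r : Phi r (x + h) = (INR k * Phi r.+1 (x + h) - (x + h) * Phi' r.+1 (x + h)) / K.
  by rewrite /Phi' /=; field; lra.
(* The constant 3k^2 of the error term is chosen so that this holds for 1 <= r+1 <= k. *)
have constant : (2 * INR k - 1) ^ 2 * INR r.+1 <= (3 * INR k ^ 2 - 1) * (INR r.+1 + INR k - 1).
  by have [|] := Rle_lt_dec 0 (- INR k ^ 2 + 4 * INR k - 2); nra.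
rewrite /G Phi_r; apply: Rminus_le.
set a := Phi r.+1 (x + h) in xE *; set b := Phi r.+1 x in xE *.
set D := Phi' r.+1 (x + h) in xE D_lo *.
rewrite (_ : _ - _ = - (/ (K * x) * ((3 * INR k ^ 2 - 1) * (INR r.+1 + INR k - 1) * h ^ 2
                                       - x * (a - b - h * D) + h ^ 2 * D))); last first.
  by rewrite S_INR; field; lra.
have h2_ge0 : 0 <= h ^ 2 by nra.
have := Rmult_le_compat_l _ _ _ h2_ge0 D_lo.
have := Rmult_le_compat_l _ _ _ h2_ge0 constant.
have : 0 < / (K * x) by apply: Rinv_0_lt_compat; nra.
nra.
Qed.

Lemma G_step_grid N l r : (1 < k)%N -> (r < k)%N -> (0 < l)%N -> (l < N)%N ->
  INR l * G (/ INR N) r.+1 (INR l / INR N) <=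
  INR l / INR N + (INR l - INR k) * G (/ INR N) r.+1 (INR l.+1 / INR N)
  + K * G (/ INR N) r (INR l.+1 / INR N).
Proof.
move=> k_gt1 r_lt_k l_gt0 l_lt_N.
have l_pos : 0 < INR l by apply: lt_0_INR; exact/ltP.
have N_pos : 0 < INR N by apply: lt_0_INR; apply/ltP; lia.
have grid : INR l / INR N + / INR N = INR l.+1 / INR N by rewrite S_INR; field; lra.
have xh_le1 : INR l / INR N + / INR N <= 1.
  rewrite grid; apply: (Rmult_le_reg_r (INR N)) => //.
  rewrite /Rdiv Rmult_assoc Rinv_l; last lra.
  by have := le_INR _ _ (leP l_lt_N); lra.
have := G_step k_gt1 r_lt_k (Rinv_0_lt_compat _ N_pos) (Rdiv_lt_0_compat _ _ l_pos N_pos) xh_le1.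
rewrite grid => step.
apply: Rle_trans (Rmult_le_compat_l _ _ _ (Rlt_le _ _ l_pos) step) _.
by right; field; lra.
Qed.

End LowerBoundFunction.

Lemma Rsum_le (I : Type) (s : seq I) (P : pred I) (F G : I -> R) :
  (forall i, P i -> F i <= G i) ->
  \big[Rplus/0]_(i <- s | P i) F i <= \big[Rplus/0]_(i <- s | P i) G i.
Proof. by move=> FG; apply: (big_ind2 Rle) => //; [lra | move=> *; lra]. Qed.

Lemma Rsum_const (I : finType) (P : pred I) (c : R) :
  \big[Rplus/0]_(i | P i) c = INR #|P| * c.
Proof. by rewrite big_const; elim: #|P| => [|m IH]; rewrite ?iterS ?IH ?S_INR /=; ring. Qed.

Lemma card_ord_lt n l : (l <= n)%N -> #|[pred t : 'I_n | (t < l)%N]| = l.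
Proof.
elim: l => [|l IH] l_le_n; first by apply: eq_card0 => t; rewrite !inE ltn0.
rewrite (@eq_card _ _ [predU1 Ordinal l_le_n & [pred t : 'I_n | (t < l)%N]]).
  by rewrite cardU1 IH ?inE /= ?ltnn // ltnW.
by move=> t; rewrite !inE /= ltnS leq_eqVlt.
Qed.

Lemma card_perm_gt0 (T : finType) : 0 < INR #|{perm T}|.
Proof. by apply: lt_0_INR; apply/ltP/card_gt0P; exists 1%g. Qed.

Section ALGproperties.
Variables (n : nat) (A : {set 'I_n} -> {set 'I_n}).
Implicit Type s : {perm 'I_n}.

Lemma card_prefix s l : (l <= n)%N -> #|prefix s l| = l.
Proof. by move=> l_le_n; rewrite card_imset ?card_ord_lt //; exact: perm_inj. Qed.

Lemma ALG_round s (u : 'I_n) r :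
  ALG A s u.+1 r.+1 =
  if s u \in A (prefix s u.+1) then s u |: ALG A s u.+2 r else ALG A s u.+2 r.+1.
Proof.
rewrite /ALG (_ : n.+1 - u.+1 = (n - u.+1).+1)%N; last by have := ltn_ord u; lia.
rewrite (_ : n.+1 - u.+2 = n - u.+1)%N /=; last lia.
case: pickP => [t /eqP [t_u] | /(_ u)]; last by rewrite eqxx.
by rewrite (_ : t = u) //; exact: val_inj.
Qed.

Lemma alg_rec_eq_after s s' l :
  (forall p : 'I_n, (l <= p)%N -> s p = s' p) ->
  (forall m, (l <= m)%N -> prefix s m = prefix s' m) ->
  forall d m r, (l < m)%N -> alg_rec A s d m r = alg_rec A s' d m r.
Proof.
move=> ss' pref; elim=> [|d IH] m [|r] l_lt_m //=.
case: pickP => [t /eqP t_m | _] //.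
by rewrite ss' ?pref ?IH //; lia.
Qed.

Lemma prefix_tperm s (t u : 'I_n) m :
  (t < m)%N -> (u < m)%N -> prefix (tperm t u * s)%g m = prefix s m.
Proof.
move=> t_lt u_lt; apply/setP => x; rewrite /prefix.
apply/imsetP/imsetP => [[p p_lt ->] | [p p_lt ->]].
- exists (tperm t u p); last by rewrite permM.
  by move: p_lt; rewrite !inE; case: tpermP.
- exists (tperm t u p); last by rewrite permM tpermK.
  by move: p_lt; rewrite !inE; case: tpermP.
Qed.

Lemma ALG_tperm s (t u : 'I_n) l r :
  (t < l)%N -> (u < l)%N -> ALG A (tperm t u * s)%g l.+1 r = ALG A s l.+1 r.
Proof.
move=> t_lt u_lt; apply: (@alg_rec_eq_after _ _ l) => // [p l_le_p | m l_le_m].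
  by rewrite permM tpermD //; apply/eqP => tu_p; subst p; lia.
by apply: prefix_tperm; lia.
Qed.

Lemma ALG_subset_succ s l r : ALG A s l r \subset ALG A s l r.+1.
Proof.
rewrite /ALG; move: (n.+1 - l)%N => d; elim: d l r => [|d IH] l [|r] //=; first by rewrite sub0set.
case: pickP => [t _ | _] //.
by case: ifP => _ //; rewrite setUS.
Qed.

End ALGproperties.

Section SubmodularBounds.
Variables (n : nat) (v : {set 'I_n} -> R).
Hypothesis v_mono : monotone v.
Hypothesis v_sub : submodular v.

Lemma submodular_sum_marginals (B X : {set 'I_n}) :
  v (X :|: B) + INR #|X| * v B <= \big[Rplus/0]_(j in X) v (j |: B) + v B.
Proof.
move: {2}#|X| (erefl #|X|) => m; elim: m X => [|m IH] X X_card.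
  move/eqP: X_card; rewrite cards_eq0 => /eqP ->.
  by rewrite big_set0 set0U cards0 /=; lra.
have /card_gt0P [e e_X] : (0 < #|X|)%N by rewrite X_card.
have X'_card : #|X :\ e| = m by move: X_card; rewrite (cardsD1 e X) e_X; lia.
rewrite (big_setD1 e e_X) X_card S_INR /=.
have := IH _ X'_card; rewrite X'_card.
have := v_sub (X :\ e :|: B) (e |: B).
have -> : (X :\ e :|: B) :|: (e |: B) = X :|: B.
  apply/setP => x; rewrite !inE; case: eqP => [-> | _] //=; first by rewrite e_X orbT.
  by rewrite -orbA orbb.
have : v B <= v ((X :\ e :|: B) :&: (e |: B)).
  by apply: v_mono; apply/subsetP => x x_B; rewrite !inE x_B !orbT.
set rest := \big[Rplus/0]_(i in X :\ e) _; lra.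
Qed.

Hypothesis v_nonneg : forall S, 0 <= v S.

Lemma submodular_round_bound (X B' B : {set 'I_n}) (k l : nat) :
  B' \subset B -> (#|X| <= k)%N -> (k <= l)%N ->
  v X + (INR l - INR k) * v B + (INR k - 1) * v B' <=
  \big[Rplus/0]_(j in X) v (j |: B') + (INR l - INR #|X|) * v B.
Proof.
move=> B'_B X_le_k k_le_l.
have := submodular_sum_marginals B' X.
have : v X <= v (X :|: B') by apply/v_mono/subsetUl.
have : v B' <= v B by exact: v_mono.
have : INR #|X| <= INR k by apply: le_INR; exact/leP.
have : INR k <= INR l by apply: le_INR; exact/leP.
have := v_nonneg B'; nra.
Qed.

End SubmodularBounds.

Section RandomOrder.
Variables (n : nat) (v : {set 'I_n} -> R).
Local Notation perms := {perm 'I_n}.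

Lemma Rsum_perm_tperm (u : 'I_n) (g : perms -> R) :
  INR u.+1 * \big[Rplus/0]_(s : perms) g s =
  \big[Rplus/0]_(s : perms) \big[Rplus/0]_(t : 'I_n | (t < u.+1)%N) g (tperm t u * s)%g.
Proof.
rewrite exchange_big (eq_bigr (fun=> \big[Rplus/0]_(s : perms) g s)).
  by rewrite Rsum_const (_ : #|_| = u.+1) //; exact: card_ord_lt (ltn_ord u).
by move=> t _; rewrite [RHS](reindex_inj (mulgI (tperm t u))).
Qed.

(* Composing with the transpositions (t u), t <= u, moves every item of U^{<=u+1} to round u+1
   while keeping the set U^{<=u+1} and all later arrivals fixed. *)
Lemma Rsum_ALG_last_arrival (A : {set 'I_n} -> {set 'I_n}) (s : perms) (u : 'I_n) r :
  (forall L, A L \subset L) ->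
  \big[Rplus/0]_(t : 'I_n | (t < u.+1)%N) v (ALG A (tperm t u * s)%g u.+1 r.+1) =
  \big[Rplus/0]_(j in A (prefix s u.+1)) v (j |: ALG A s u.+2 r) +
  (INR u.+1 - INR #|A (prefix s u.+1)|) * v (ALG A s u.+2 r.+1).
Proof.
move=> A_sub; set S := prefix s u.+1; set X := A S.
have X_S : X \subset S := A_sub S.
pose g j := if j \in X then v (j |: ALG A s u.+2 r) else v (ALG A s u.+2 r.+1).
rewrite [LHS](eq_bigr (fun t => g (s t))); last first.
  move=> t t_lt /=; rewrite ALG_round permM tpermR prefix_tperm // !ALG_tperm //.
  by rewrite /g -/S -/X; case: ifP.
rewrite (_ : \big[Rplus/0]_(t : 'I_n | (t < u.+1)%N) g (s t) = \big[Rplus/0]_(j in S) g j);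
  last by rewrite /S /prefix big_imset /=; [apply: eq_bigl | move=> x y _ _; exact: perm_inj].
rewrite (bigID (fun j => j \in X)); congr (_ + _).
  apply: eq_big => [j | j /andP[_ j_X]]; last by rewrite /g j_X.
  by rewrite andb_idl // => /(subsetP X_S).
rewrite (eq_bigr (fun=> v (ALG A s u.+2 r.+1))) => [|j /andP[_ /negbTE j_X]];
  last by rewrite /g j_X.
rewrite Rsum_const (_ : #|_| = #|S :\: X|); last by apply: eq_card => j; rewrite !inE andbC.
congr (_ * _); have := cardsID X S; rewrite (setIidPr X_S) card_prefix ?ltn_ord // => <-.
by rewrite plus_INR; ring.
Qed.

Lemma Rsum_mem_prefix (e : 'I_n) l : (l <= n)%N ->
  INR n * \big[Rplus/0]_(s : perms) INR (e \in prefix s l) = INR #|perms| * INR l.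
Proof.
move=> l_le_n.
have symmetric (e' : 'I_n) : \big[Rplus/0]_(s : perms) INR (e' \in prefix s l) =
                            \big[Rplus/0]_(s : perms) INR (e \in prefix s l).
  rewrite [RHS](reindex_inj (mulIg (tperm e e'))); apply: eq_bigr => s _.
  have -> : prefix (s * tperm e e')%g l = [set tperm e e' x | x in prefix s l].
    by rewrite /prefix -imset_comp; apply: eq_imset => t; rewrite /= permM.
  by rewrite -[X in _ = INR (X \in _)](tpermR e e') mem_imset //; exact: perm_inj.
rewrite -{1}(card_ord n) -Rsum_const -(eq_bigr _ (fun e' _ => symmetric e')) exchange_big.
rewrite (eq_bigr (fun=> INR l)) ?Rsum_const // => s _.
rewrite (eq_bigr (fun i => if i \in prefix s l then 1 else 0)) => [|i _]; last by case: (_ \in _).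
by rewrite -big_mkcond Rsum_const card_prefix //; ring.
Qed.

Hypothesis v_sub : submodular v.

Lemma Rsum_value_sample (Sf : perms -> {set 'I_n}) (c : R) :
  (forall e, \big[Rplus/0]_(s : perms) INR (e \in Sf s) = c) ->
  forall T : {set 'I_n},
  \big[Rplus/0]_(s : perms) v set0 + c * (v T - v set0) <= \big[Rplus/0]_(s : perms) v (T :&: Sf s).
Proof.
move=> Sf_count T; move: {2}#|T| (erefl #|T|) => m; elim: m T => [|m IH] T T_card.
  move/eqP: T_card; rewrite cards_eq0 => /eqP ->.
  have -> : \big[Rplus/0]_(s : perms) v (set0 :&: Sf s) = \big[Rplus/0]_(s : perms) v set0.
    by apply: eq_bigr => s _; rewrite set0I.
  lra.
have /card_gt0P [e e_T] : (0 < #|T|)%N by rewrite T_card.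
have := IH (T :\ e) ltac:(by move: T_card; rewrite (cardsD1 e T) e_T; lia).
have step s : v ((T :\ e) :&: Sf s) + INR (e \in Sf s) * (v T - v (T :\ e)) <= v (T :&: Sf s).
  case e_S: (e \in Sf s) => /=; last first.
    rewrite (_ : T :&: Sf s = (T :\ e) :&: Sf s); first lra.
    by apply/setP => x; rewrite !inE; case: eqP => [-> | _] /=; rewrite ?e_S ?andbF.
  have := v_sub (e |: ((T :\ e) :&: Sf s)) (T :\ e).
  rewrite (_ : e |: ((T :\ e) :&: Sf s) :|: T :\ e = T); last first.
    by apply/setP => x; rewrite !inE; case: eqP => [-> | _] /=; rewrite ?e_T ?andbK.
  rewrite (_ : (e |: ((T :\ e) :&: Sf s)) :&: (T :\ e) = (T :\ e) :&: Sf s); last first.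
    by apply/setP => x; rewrite !inE; case: eqP => [-> | _] //=; rewrite andbC andbA andbb.
  rewrite (_ : e |: ((T :\ e) :&: Sf s) = T :&: Sf s); last first.
    by apply/setP => x; rewrite !inE; case: eqP => [-> | _] /=; rewrite ?e_T ?e_S.
  lra.
have : \big[Rplus/0]_(s : perms) (v ((T :\ e) :&: Sf s) + (v T - v (T :\ e)) * INR (e \in Sf s))
       <= \big[Rplus/0]_(s : perms) v (T :&: Sf s).
  by apply: Rsum_le => s _; rewrite Rmult_comm; exact: step.
rewrite big_split -big_distrr /= Sf_count.
set rest := \big[Rplus/0]_(s : perms) v ((T :\ e) :&: Sf s); lra.
Qed.

Hypothesis v_nonneg : forall S, 0 <= v S.

Lemma Rsum_value_prefix_ge (T : {set 'I_n}) l : (l <= n)%N -> (0 < n)%N ->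
  INR #|perms| * INR l / INR n * v T <= \big[Rplus/0]_(s : perms) v (T :&: prefix s l).
Proof.
move=> l_le_n n_gt0.
have n_pos : 0 < INR n by apply: lt_0_INR; exact/ltP.
have N_pos := card_perm_gt0 'I_n.
have l_le : INR l <= INR n by apply: le_INR; exact/leP.
set c := INR #|perms| * INR l / INR n.
have count e : \big[Rplus/0]_(s : perms) INR (e \in prefix s l) = c.
  have := Rsum_mem_prefix e l_le_n; rewrite /c => <-.
  by set S := \big[Rplus/0]_(s : perms) _; field; lra.
have frac : 0 <= INR l / INR n <= 1.
  split; first by apply: Rmult_le_pos; [exact: pos_INR | exact/Rlt_le/Rinv_0_lt_compat].
  by apply: (Rmult_le_reg_r (INR n)) => //; rewrite /Rdiv Rmult_assoc Rinv_l; lra.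
have c_bounds : 0 <= c <= INR #|perms| by rewrite /c /Rdiv Rmult_assoc; nra.
have := Rsum_value_sample count T; rewrite Rsum_const (_ : #|_| = #|perms|) //.
have := v_nonneg set0; have := v_nonneg T; nra.
Qed.

End RandomOrder.

Section Recursion.
Variables (n k : nat) (v : {set 'I_n} -> R) (A : {set 'I_n} -> {set 'I_n}).
Variables (alpha : R) (OPT : {set 'I_n}).
Hypothesis v_nonneg : forall S, 0 <= v S.
Hypothesis v_mono : monotone v.
Hypothesis v_sub : submodular v.
Hypothesis OPT_card : (#|OPT| <= k)%N.
Hypothesis alpha_ge0 : 0 <= alpha.
Hypothesis A_sub : forall L, A L \subset L.
Hypothesis A_card : forall L, (#|A L| <= k)%N.
Hypothesis A_approx : forall L T : {set 'I_n}, T \subset L -> (#|T| <= k)%N ->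
  alpha * v T <= v (A L).

Local Notation perms := {perm 'I_n}.
Local Notation EALG l r := (Eperm (fun s => v (ALG A s l r))).

Lemma EALG_ge0 l r : 0 <= EALG l r.
Proof.
rewrite /Eperm /Rdiv; apply: Rmult_le_pos; last exact/Rlt_le/Rinv_0_lt_compat/card_perm_gt0.
by apply: (big_ind (Rle 0)) => //; [lra | move=> *; lra].
Qed.

Lemma ALG_round_value_bound s (u : 'I_n) r : (k <= u.+1)%N ->
  alpha * v (OPT :&: prefix s u.+1) + (INR u.+1 - INR k) * v (ALG A s u.+2 r.+1)
  + (INR k - 1) * v (ALG A s u.+2 r)
  <= \big[Rplus/0]_(t : 'I_n | (t < u.+1)%N) v (ALG A (tperm t u * s)%g u.+1 r.+1).
Proof.
move=> k_le_l; rewrite Rsum_ALG_last_arrival //.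
have := submodular_round_bound v_mono v_sub v_nonneg
          (ALG_subset_succ A s u.+2 r) (A_card (prefix s u.+1)) k_le_l.
have : alpha * v (OPT :&: prefix s u.+1) <= v (A (prefix s u.+1)).
  apply: A_approx; first exact: subsetIr.
  exact: leq_trans (subset_leq_card (subsetIl _ _)) OPT_card.
set marginals := \big[Rplus/0]_(j in _) _; lra.
Qed.

Lemma EALG_round (u : 'I_n) r : (k <= u.+1)%N ->
  INR u.+1 / INR n * (alpha * v OPT) + (INR u.+1 - INR k) * EALG u.+2 r.+1
  + (INR k - 1) * EALG u.+2 r <= INR u.+1 * EALG u.+1 r.+1.
Proof.
move=> k_le_l.
have : \big[Rplus/0]_(s : perms) (alpha * v (OPT :&: prefix s u.+1)
           + (INR u.+1 - INR k) * v (ALG A s u.+2 r.+1) + (INR k - 1) * v (ALG A s u.+2 r))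
       <= INR u.+1 * \big[Rplus/0]_(s : perms) v (ALG A s u.+1 r.+1).
  by rewrite Rsum_perm_tperm; apply: Rsum_le => s _; exact: ALG_round_value_bound.
have n_gt0 : (0 < n)%N by apply: leq_ltn_trans (ltn_ord u).
have := Rsum_value_prefix_ge v_sub v_nonneg OPT (ltn_ord u) n_gt0.
have := card_perm_gt0 'I_n.
rewrite !big_split -!big_distrr /Eperm; set l := INR u.+1; rewrite /=.
set N := INR #|perms|.
set S1 := \big[Rplus/0]_(s : perms) v (ALG A s u.+1 r.+1).
set S2 := \big[Rplus/0]_(s : perms) v (ALG A s u.+2 r.+1).
set S3 := \big[Rplus/0]_(s : perms) v (ALG A s u.+2 r).
set SO := \big[Rplus/0]_(s : perms) v (OPT :&: prefix s u.+1).
move=> N_pos opt sum_orders.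
have n_pos : 0 < INR n by apply: lt_0_INR; exact/ltP.
rewrite [X in X <= _](_ : _ = (alpha * (N * l / INR n * v OPT) + (l - INR k) * S2
                                 + (INR k - 1) * S3) / N); last by field; lra.
rewrite [X in _ <= X](_ : _ = l * S1 / N); last by field; lra.
apply: Rmult_le_compat_r; first exact/Rlt_le/Rinv_0_lt_compat.
have := Rmult_le_compat_l _ _ _ alpha_ge0 opt; lra.
Qed.

Hypothesis k_gt1 : (1 < k)%N.

Lemma EALG_ge_G l r : (k <= l <= n)%N -> (r <= k)%N ->
  G k (/ INR n) r (INR l / INR n) * (alpha * v OPT) <= EALG l r.
Proof.
have V_ge0 : 0 <= alpha * v OPT by apply: Rmult_le_pos.
have k_ge2 : 2 <= INR k by apply: (le_INR 2); exact/leP.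
move=> /andP[k_le_l l_le_n]; move: {2}(n - l)%N (erefl (n - l)%N) => d.
elim: d l r k_le_l l_le_n => [|d IH] l r k_le_l l_le_n nl_d r_le_k.
  have -> : l = n by lia.
  have n_pos : 0 < INR n by apply: lt_0_INR; apply/ltP; lia.
  rewrite (_ : INR n / INR n = 1); last by field; lra.
  have := G_at_1 r k_gt1 (Rlt_le _ _ (Rinv_0_lt_compat _ n_pos)).
  have := EALG_ge0 n r; nra.
case: r r_le_k => [|r] r_lt_k; first by rewrite G_0 Rmult_0_l; exact: EALG_ge0.
have l_gt0 : (0 < l)%N by lia.
have l_lt_n : (l < n)%N by lia.
have l_pos : 0 < INR l by apply: lt_0_INR; exact/ltP.
have IH1 := IH l.+1 r.+1 ltac:(lia) l_lt_n ltac:(lia) r_lt_k.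
have IH0 := IH l.+1 r ltac:(lia) l_lt_n ltac:(lia) (ltnW r_lt_k).
have := G_step_grid (ltnW k_gt1) k_gt1 r_lt_k l_gt0 l_lt_n.
have [u u_l] : {u : 'I_n | u.+1 = l}.
  by exists (Ordinal (leq_ltn_trans (leq_pred l) l_lt_n)); rewrite /= prednK.
subst l; move: (EALG_round r k_le_l) => round step.
have l_k : 0 <= INR u.+1 - INR k by have := le_INR _ _ (leP k_le_l); lra.
have := Rmult_le_compat_r _ _ _ V_ge0 step.
have := Rmult_le_compat_l _ _ _ l_k IH1.
have := Rmult_le_compat_l (INR k - 1) _ _ ltac:(lra) IH0.
by move=> *; apply: (Rmult_le_reg_l (INR u.+1)) => //; lra.
Qed.

End Recursion.

Theorem mainTheorem4 (n k : nat) (v : {set 'I_n} -> R)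
  (A : {set 'I_n} -> {set 'I_n}) (alpha : R) (OPT : {set 'I_n})
  (v_nonneg : forall S, 0 <= v S)
  (v_mono : monotone v)
  (v_sub : submodular v)
  (k_ge2 : (2 <= k)%N)
  (OPT_card : (#|OPT| <= k)%N)
  (OPT_max : forall S : {set 'I_n}, (#|S| <= k)%N -> v S <= v OPT)
  (alpha_pos : 0 < alpha) (alpha_le1 : alpha <= 1)
  (A_sub : forall L, A L \subset L)
  (A_card : forall L, (#|A L| <= k)%N)
  (A_approx : forall L T : {set 'I_n}, T \subset L -> (#|T| <= k)%N ->
                alpha * v T <= v (A L)) :
  forall l r : nat, (1 <= l <= n)%N -> (k * k + k <= l)%N -> (r <= k)%N ->
  Eperm (fun sigma => v (ALG A sigma l r)) >=
  (INR r * INR l / ((INR k - 1) * INR n)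
   - 1 / (INR k - 1) * (INR l / INR n) ^ k *
     \big[Rplus/0]_(0 <= r' < r) \big[Rplus/0]_(0 <= i < r'.+1)
        ((INR k - 1) ^ i / INR (i`!) * (ln (INR n / INR l)) ^ i)
   - 3 * INR k ^ 2 * INR r / ((INR k - 1) * INR n)) * alpha * v OPT.
Proof.
move=> l r /andP[l_gt0 l_le_n] kk_le_l r_le_k.
have k_le_l : (k <= l)%N by apply: leq_trans (leq_addl _ _) kk_le_l.
have l_pos : 0 < INR l by apply: lt_0_INR; exact/ltP.
have n_pos : 0 < INR n by apply: lt_0_INR; apply/ltP; lia.
have k_gt1 : 1 < INR k by apply: (lt_INR 1); exact/ltP.
have ln_ratio : ln (INR n / INR l) = - ln (INR l / INR n).
  by rewrite -ln_Rinv ?Rinv_div //; exact: Rdiv_lt_0_compat.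
apply: Rle_ge; rewrite exp_trunc_sum_big ln_ratio -Ropp_mult_distr_r.
have := EALG_ge_G v_nonneg v_mono v_sub OPT_card (Rlt_le _ _ alpha_pos) A_sub A_card
          A_approx k_ge2 (r := r) (l := l) ltac:(by rewrite k_le_l l_le_n) r_le_k.
by apply: Rle_trans; right; rewrite /G /Phi; field; lra.
Qed.
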